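(* Let $k$ be an algebraically closed field of characteristic $0$. Let $G$ be a finite group acting on an irreducible affine algebraic variety $X$, and let $Z$ be an irreducible affine algebraic variety (endowed with an action of an algebraic torus $T$ having an open orbit). Let $\pi_{X,G}\colon X\to X/\!\!/G$ be the categorical quotient. Then for every two morphisms $\psi_1,\psi_2\colon Z\to X$ the following are equivalent: (i) $\pi_{X,G}\circ\psi_1=\pi_{X,G}\circ\psi_2$; (ii) there is $g\in G$ such that $\psi_2=g\cdot\psi_1$.
   Context: $X/\!\!/G$ is the affine variety with coordinate ring $k[X]^G$ and $\pi_{X,G}$ is the morphism induced by the inclusion $k[X]^G\subseteq k[X]$. For a morphism $\psi\colon Z\to X$ and $g\in G$, the morphism $g\cdot\psi$ is defined by $(g\cdot\psi)(z)=g\cdot(\psi(z))$. *)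

From HB Require Import structures.
From mathcomp Require Import all_boot all_order all_algebra all_fingroup.
From mathcomp Require Import mpoly.
Set Implicit Arguments. Unset Strict Implicit. Unset Printing Implicit Defensive.
Import Order.TTheory GRing.Theory Num.Theory.
Local Open Scope ring_scope.

Section AffVar.
Variable k : closedFieldType.

Definition pt (n : nat) := 'I_n -> k.

Definition zclosed (n : nat) (X : pt n -> Prop) : Prop :=
  exists S : {mpoly k[n]} -> Prop,
    forall x, X x <-> (forall p, S p -> p.@[x] = 0).

Definition affine_variety (n : nat) (X : pt n -> Prop) : Prop := zclosed X.

Definition irreducible_var (n : nat) (X : pt n -> Prop) : Prop :=
  affine_variety X /\ (exists x, X x) /\
  forall C1 C2 : pt n -> Prop, zclosed C1 -> zclosed C2 ->
    (forall x, X x -> C1 x \/ C2 x) ->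
    (forall x, X x -> C1 x) \/ (forall x, X x -> C2 x).

Definition var_morphism (m n : nat) (Z : pt m -> Prop) (X : pt n -> Prop)
  (f : pt m -> pt n) : Prop :=
  (exists P : 'I_n -> {mpoly k[m]}, forall z, Z z -> forall i, f z i = (P i).@[z])
  /\ (forall z, Z z -> X (f z)).

Definition group_action (gT : finGroupType) (n : nat) (X : pt n -> Prop)
  (act : gT -> pt n -> pt n) : Prop :=
  (forall g, var_morphism X X (act g)) /\
  (forall x, X x -> act 1%g x = x) /\
  (forall g h x, X x -> act (g * h)%g x = act g (act h x)).

(* G-invariant regular functions (elements of k[X]^G, represented by polynomials) *)
Definition invariant_fun (gT : finGroupType) (n : nat) (X : pt n -> Prop)
  (act : gT -> pt n -> pt n) (p : {mpoly k[n]}) : Prop :=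
  forall g x, X x -> p.@[act g x] = p.@[x].

Definition ptcat (r m : nat) (t : pt r) (z : pt m) : pt (r + m) :=
  fun i => match split i with inl a => t a | inr b => z b end.

Definition torus_pt (r : nat) (t : pt r) : Prop := forall i, t i != 0.

(* action of the torus T = (k^x)^r on Z, given by a var_morphism T x Z -> Z
   (regular functions on T x Z are P(t,z) / (t_1...t_r)^N) *)
Definition torus_action (r m : nat) (Z : pt m -> Prop)
  (tau : pt r -> pt m -> pt m) : Prop :=
  (exists (N : nat) (P : 'I_m -> {mpoly k[r + m]}),
     forall t z, torus_pt t -> Z z -> forall i,
       tau t z i * (\prod_j t j) ^+ N = (P i).@[ptcat t z]) /\
  (forall t z, torus_pt t -> Z z -> Z (tau t z)) /\
  (forall z, Z z -> tau (fun _ => 1) z = z) /\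
  (forall t s z, torus_pt t -> torus_pt s -> Z z ->
     tau (fun i => t i * s i) z = tau t (tau s z)).

Definition has_open_orbit (r m : nat) (Z : pt m -> Prop)
  (tau : pt r -> pt m -> pt m) : Prop :=
  exists z0, Z z0 /\ exists C : pt m -> Prop, zclosed C /\
    forall z, (Z z /\ ~ C z) <-> (exists t, torus_pt t /\ z = tau t z0).

End AffVar.

(* Invariants separate the finitely many orbits of G: if y is not in the orbit
   of x, a polynomial h vanishing at y and equal to 1 on the orbit of x yields
   the invariant z |-> prod_g h (g z), which is 1 at x and 0 at y.  A product
   is used instead of the Reynolds average.  Hence if psi1 and psi2 agree after the quotient map, Z is covered by
   the finitely many closed sets {z | psi2 z = g (psi1 z)}, and irreducibility
   of Z puts it inside one of them. *)
From HB Require Import structures.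
From mathcomp Require Import all_boot all_order all_algebra all_fingroup.
From mathcomp Require Import mpoly.
From Stdlib Require Import Classical FunctionalExtensionality.
Import Order.TTheory GRing.Theory Num.Theory.
Local Open Scope ring_scope.

Section AffineVarieties.
Local Set Implicit Arguments.
Local Unset Strict Implicit.
Variable k : closedFieldType.

Lemma zclosedU n (C1 C2 : pt k n -> Prop) :
  zclosed C1 -> zclosed C2 -> zclosed (fun x => C1 x \/ C2 x).
Proof.
move=> [S1 HS1] [S2 HS2].
exists (fun p => exists p1 p2, [/\ S1 p1, S2 p2 & p = p1 * p2]) => x; split.
  move=> Cx _ [p1 [p2 [Sp1 Sp2 ->]]]; rewrite mevalM.
  by case: Cx => [/HS1/(_ _ Sp1) -> | /HS2/(_ _ Sp2) ->]; rewrite ?mul0r ?mulr0.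
move=> Hx; case: (classic (C1 x)) => [|nC1x]; [by left | right].
have [p1 np1] : exists p1, ~ (S1 p1 -> p1.@[x] = 0).
  by apply: not_all_ex_not => h; apply/nC1x/HS1.
have [Sp1 p1x_neq0] : S1 p1 /\ p1.@[x] != 0.
  by split; [apply: NNPP => nS; apply: np1 => /nS | apply/eqP => e; apply: np1].
apply/HS2 => p2 Sp2; apply/eqP.
have /eqP : (p1 * p2).@[x] = 0 by apply: Hx; exists p1, p2.
by rewrite mevalM mulf_eq0 (negbTE p1x_neq0).
Qed.

Lemma zclosed0 n : zclosed (fun _ : pt k n => False).
Proof.
exists (fun p => p = 1) => x; split=> // H.
by move: (H 1 erefl); rewrite meval1 => /eqP; rewrite oner_eq0.
Qed.

Lemma zclosed_bigU n (I : eqType) (C : I -> pt k n -> Prop) (s : seq I) :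
  (forall i, zclosed (C i)) -> zclosed (fun x => exists2 i, i \in s & C i x).
Proof.
move=> closedC; elim: s => [|a s IHs].
  by have [S HS] := zclosed0 n; exists S => x; rewrite -HS; split=> // -[].
have [S HS] := zclosedU (closedC a) IHs; exists S => x; rewrite -HS; split.
  by case=> i; rewrite inE => /predU1P [-> | si] Cix; [left | right; exists i].
case=> [Cax | [i si Cix]]; first by exists a; rewrite ?mem_head.
by exists i; rewrite ?inE ?si ?orbT.
Qed.

Lemma irreducible_var_cover m (Z : pt k m -> Prop) (I : eqType)
    (C : I -> pt k m -> Prop) (s : seq I) :
  irreducible_var Z -> (forall i, zclosed (C i)) ->
  (forall z, Z z -> exists2 i, i \in s & C i z) ->
  exists2 i, i \in s & forall z, Z z -> C i z.
Proof.
move=> [_ [[z0 Zz0] irrZ]] closedC; elim: s => [|a s IHs] coverZ.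
  by have [] := coverZ _ Zz0.
have [|Ca | /IHs [i si CiZ]] := irrZ _ _ (closedC a) (zclosed_bigU s closedC).
- move=> z /coverZ [i]; rewrite inE => /predU1P [-> | si] Ciz; first by left.
  by right; exists i.
- by exists a; rewrite ?mem_head.
- by exists i; rewrite ?inE ?si ?orbT.
Qed.

Lemma var_morphism_pullback m n (Z : pt k m -> Prop) (X : pt k n -> Prop) f :
  var_morphism Z X f ->
  forall p : {mpoly k[n]},
    exists q : {mpoly k[m]}, forall z, Z z -> p.@[f z] = q.@[z].
Proof.
move=> [[P HP] _] p; exists (p \mPo [tuple P i | i < n]) => z Zz.
by rewrite comp_mpoly_meval; apply: meval_eq => i; rewrite tnth_mktuple HP.
Qed.

Lemma var_morphism_comp l m n (Z : pt k l -> Prop) (Y : pt k m -> Prop)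
    (X : pt k n -> Prop) f g :
  var_morphism Z Y f -> var_morphism Y X g -> var_morphism Z X (g \o f).
Proof.
move=> mf [[Q HQ] gYX]; split; last by move=> z /(proj2 mf) /gYX.
have /fin_all_exists [P HP] := fun i => var_morphism_pullback mf (Q i).
by exists P => z Zz i /=; rewrite HQ ?HP //; apply: (proj2 mf).
Qed.

Lemma zclosed_var_morphism_eq m n (Z : pt k m -> Prop) (X : pt k n -> Prop)
    f g :
  var_morphism Z X f -> var_morphism Z X g ->
  exists2 C, zclosed C & forall z, Z z -> C z <-> f z = g z.
Proof.
move=> [[P HP] _] [[Q HQ] _].
exists (fun z => forall i, (P i - Q i).@[z] = 0).
  exists (fun p => exists i, p = P i - Q i) => z.
  by split=> [H _ [i ->] // | H i]; apply: H; exists i.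
move=> z Zz; split=> [PQz | fgz i].
  apply: functional_extensionality => i; rewrite HP ?HQ //.
  by apply/eqP; rewrite -subr_eq0 -mevalB PQz.
by rewrite mevalB -HP // -HQ // fgz subrr.
Qed.

Lemma mpoly_separates_points n (x y : pt k n) :
  x <> y -> exists f : {mpoly k[n]}, f.@[x] = 0 /\ f.@[y] = 1.
Proof.
move=> x_neq_y; have [i xyi] : exists i, x i != y i.
  apply: NNPP => h; apply/x_neq_y/functional_extensionality => i.
  by apply/eqP; apply: NNPP => /negP ne; apply: h; exists i.
exists (('X_i - (x i)%:MP) * ((y i - x i)^-1)%:MP).
rewrite !(mevalM, mevalB, mevalXU, mevalC) subrr mul0r mulfV //.
by rewrite subr_eq0 eq_sym.
Qed.

Lemma mpoly_separates_finite n (I : finType) (a : I -> pt k n) (y : pt k n) :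
  (forall i, a i <> y) ->
  exists h : {mpoly k[n]}, h.@[y] = 0 /\ forall i, h.@[a i] = 1.
Proof.
move=> a_neq_y.
have /fin_all_exists [f Hf] := fun i => mpoly_separates_points (a_neq_y i).
exists (1 - \prod_i f i); split=> [|i]; rewrite mevalB meval1 rmorph_prod.
  by rewrite big1 ?subrr // => i _; case: (Hf i).
by rewrite (bigD1 i) //= (proj1 (Hf i)) mul0r subr0.
Qed.

Section FiniteGroupAction.
Variables (gT : finGroupType) (n : nat) (X : pt k n -> Prop)
  (act : gT -> pt k n -> pt k n).
Hypothesis actX : group_action X act.

Lemma invariant_orbit_prod (h : {mpoly k[n]}) :
  exists2 p, invariant_fun X act p &
    forall x, X x -> p.@[x] = \prod_g h.@[act g x].
Proof.
have [morph_act [_ actM]] := actX.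
have /fin_all_exists [q Hq] := fun g => var_morphism_pullback (morph_act g) h.
have pE x : X x -> (\prod_g q g).@[x] = \prod_g h.@[act g x].
  by move=> Xx; rewrite rmorph_prod; apply: eq_bigr => g _; rewrite Hq.
exists (\prod_g q g) => // g0 x Xx.
rewrite !pE //; last exact: (proj2 (morph_act g0)).
by rewrite [RHS](reindex_inj (mulIg g0)); apply: eq_bigr => g _; rewrite actM.
Qed.

Lemma invariants_separate_orbits x y : X x -> X y ->
  (forall p, invariant_fun X act p -> p.@[x] = p.@[y]) ->
  exists g, y = act g x.
Proof.
move=> Xx Xy xy_inv; apply: NNPP => not_in_orbit.
have [h [hy horbit]] : exists h : {mpoly k[n]},
    h.@[y] = 0 /\ forall g, h.@[act g x] = 1.
  by apply: mpoly_separates_finite => g e; apply: not_in_orbit; exists g.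
have [p p_inv pE] := invariant_orbit_prod h.
have [_ [act1 _]] := actX.
have := xy_inv p p_inv.
rewrite !pE // (eq_bigr _ (fun g _ => horbit g)) big1_eq.
by rewrite (bigD1 1%g) //= act1 // hy mul0r => /eqP; rewrite oner_eq0.
Qed.

End FiniteGroupAction.

End AffineVarieties.

Theorem lemma2p9 (k : closedFieldType) (Hchar : [pchar k] =i pred0)
  (gT : finGroupType) (n : nat) (X : pt k n -> Prop)
  (act : gT -> pt k n -> pt k n)
  (r m : nat) (Z : pt k m -> Prop) (tau : pt k r -> pt k m -> pt k m) :
  irreducible_var X -> group_action X act ->
  irreducible_var Z -> torus_action Z tau -> has_open_orbit Z tau ->
  forall psi1 psi2 : pt k m -> pt k n,
    var_morphism Z X psi1 -> var_morphism Z X psi2 ->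
    ((forall p : {mpoly k[n]}, invariant_fun X act p ->
        forall z, Z z -> p.@[psi1 z] = p.@[psi2 z])
     <-> (exists g : gT, forall z, Z z -> psi2 z = act g (psi1 z))).
Proof.
move=> _ actX irrZ _ _ psi1 psi2 mpsi1 mpsi2; split; last first.
  move=> [g psi2E] p p_inv z Zz.
  by rewrite psi2E // p_inv //; exact: (proj2 mpsi1).
move=> same_invariants.
have /fin_all_exists [C HC] : forall g, exists C, zclosed C /\
    forall z, Z z -> C z <-> psi2 z = act g (psi1 z).
  move=> g; have [C closedC CE] := zclosed_var_morphism_eq mpsi2
    (var_morphism_comp mpsi1 (proj1 actX g)).
  by exists C.
have coverZ z : Z z -> exists2 g, g \in enum gT & C g z.
  move=> Zz; have [g psi2z] := invariants_separate_orbits actX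
    (proj2 mpsi1 z Zz) (proj2 mpsi2 z Zz)
    (fun p p_inv => same_invariants p p_inv z Zz).
  by exists g; rewrite ?mem_enum // (proj2 (HC g)).
have [g _ CgZ] := irreducible_var_cover irrZ (fun g => proj1 (HC g)) coverZ.
by exists g => z Zz; apply/(proj2 (HC g) z Zz)/CgZ.
Qed.
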